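(* Let $1\le k\le d$, $\epsilon>0$, let $P\subset\mathbb{R}^d$ be a finite point set, and let $c(P)$ be the output of the Local Search algorithm (defined in the context) run on $P$ with parameters $k$ and $\epsilon$. Then for every $(k-1)$-dimensional linear subspace $\mathcal{H}$ of $\mathbb{R}^d$, $$h(c(P),\mathcal{H})\ge\frac{h(P,\mathcal{H})}{2k(1+\epsilon)}.$$
   Context: For a finite set $S\subset\mathbb{R}^d$ with $|S|=j$, $\mathrm{VOL}(S)$ denotes the $j$-dimensional volume of the parallelepiped spanned by the vectors of $S$. For a set $\mathcal{C}$ and points $p,q$, $\mathcal{C}+q-p$ denotes $(\mathcal{C}\setminus\{p\})\cup\{q\}$. The Local Search algorithm on input $P$, $k$, $\epsilon$: initialize $\mathcal{C}=\emptyset$; for $i=1,\dots,k$ add to $\mathcal{C}$ a point $\arg\max_{p\in P\setminus\mathcal{C}}\mathrm{VOL}(\mathcal{C}\cup\{p\})$; then repeat: if there are $q\in P\setminus\mathcal{C}$ and $p\in\mathcal{C}$ with $\mathrm{VOL}(\mathcal{C}+q-p)\ge(1+\epsilon)\mathrm{VOL}(\mathcal{C})$, replace $p$ by $q$; until no such pair exists; output $\mathcal{C}$. For a point set $Q$ and a subspace $\mathcal{H}$, $h(Q,\mathcal{H})=\max_{p\in Q}\mathrm{dist}(p,\mathcal{H})$, where $\mathrm{dist}(p,\mathcal{H})$ is the Euclidean distance from $p$ to $\mathcal{H}$ (the $k$-directional height). *)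

From HB Require Import structures.
From mathcomp Require Import all_boot all_order all_algebra.
From mathcomp Require Import finmap.
From mathcomp Require Import boolp classical_sets reals.
From Stdlib Require Import Relations.
Set Implicit Arguments. Unset Strict Implicit. Unset Printing Implicit Defensive.
Import Order.TTheory GRing.Theory Num.Theory.
Local Open Scope ring_scope.
Local Open Scope fset_scope.

Section LocalSearch.
Variables (R : realType) (d : nat).
Notation pt := 'rV[R]_d.

Definition enorm (v : pt) : R := Num.sqrt (\sum_(i < d) v ord0 i ^+ 2).

Definition vecs_mx (s : seq pt) : 'M[R]_(size s, d) :=
  \matrix_(i < size s) nth 0 s i.

(* |S|-dimensional volume of the parallelepiped spanned by S:
   square root of the Gram determinant *)
Definition VOL (S : {fset pt}) : R :=
  let M := vecs_mx (enum_fset S) in Num.sqrt (\det (M *m M^T)).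

Definition greedy_step (P C C' : {fset pt}) : Prop :=
  exists p, [/\ p \in P, p \notin C, C' = p |` C &
    forall q, q \in P -> q \notin C -> VOL (q |` C) <= VOL (p |` C)].

Inductive greedy_reach (P : {fset pt}) : nat -> {fset pt} -> Prop :=
| greedy0 : greedy_reach P 0 fset0
| greedyS n C C' : greedy_reach P n C -> greedy_step P C C' ->
    greedy_reach P n.+1 C'.

Definition swap_step (P : {fset pt}) (eps : R) (C C' : {fset pt}) : Prop :=
  exists q p, [/\ q \in P, q \notin C, p \in C,
    C' = q |` (C `\ p) & VOL C' >= (1 + eps) * VOL C].

Definition LS_output (P : {fset pt}) (k : nat) (eps : R) (C : {fset pt}) : Prop :=
  exists C0, [/\ greedy_reach P k C0,
    clos_refl_trans _ (swap_step P eps) C0 C &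
    ~ (exists C', swap_step P eps C C')].

Definition dist (p : pt) (H : 'M[R]_d) : R :=
  inf [set enorm (p - h) | h in [set h : pt | (h <= H)%MS]].

Definition height (Q : {fset pt}) (H : 'M[R]_d) : R :=
  \big[Num.max/0]_(p <- enum_fset Q) dist p H.

End LocalSearch.

(* Let C = {x_1, ..., x_k} be locally optimal and q a point of P outside C.
   Write q = a_1 x_1 + ... + a_k x_k + r with r orthogonal to span C, and let
   d_i be the distance of x_i to the span of the other points of C.  Swapping
   x_i for q multiplies the volume by sqrt (a_i^2 d_i^2 + |r|^2) / d_i, the
   ratio of the distances of q and x_i to that span, so local optimality gives
   |a_i| < 1 + eps and |r| < (1 + eps) d_i for every i.
   Projected onto the (k-1)-dimensional H the k points of C are dependent; a
   dependence g normalised so that g_j = 1 >= |g_i| gives a vector g C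
   orthogonal to H with d_j <= |g C| <= k h(C, H).  Hence
   dist (q, H) <= sum_i |a_i| dist (x_i, H) + |r| <= 2 k (1 + eps) h(C, H). *)

From HB Require Import structures.
From mathcomp Require Import all_boot all_order all_algebra.
From mathcomp Require Import finmap.
From mathcomp Require Import classical_sets reals.
From mathcomp Require Import perm ring lra.
Import Order.TTheory GRing.Theory Num.Theory.
Set Implicit Arguments. Unset Strict Implicit. Unset Printing Implicit Defensive.
Local Open Scope ring_scope.

Section DotProduct.
Variables (R : realFieldType) (n : nat).
Implicit Types (a : R) (u v w : 'rV[R]_n).

Definition dot u v : R := (u *m v^T) 0 0.
Definition sqnorm u : R := dot u u.

Lemma dotE u v : dot u v = \sum_(i < n) u 0 i * v 0 i.
Proof. by rewrite /dot mxE; apply: eq_bigr => i _; rewrite mxE. Qed.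

Lemma dotC u v : dot u v = dot v u.
Proof. by rewrite !dotE; apply: eq_bigr => i _; rewrite mulrC. Qed.

Lemma dotDl u v w : dot (u + v) w = dot u w + dot v w.
Proof. by rewrite /dot mulmxDl mxE. Qed.

Lemma dotZl a u v : dot (a *: u) v = a * dot u v.
Proof. by rewrite /dot -scalemxAl mxE. Qed.

Lemma dotDr u v w : dot u (v + w) = dot u v + dot u w.
Proof. by rewrite !(dotC u) dotDl. Qed.

Lemma dotZr a u v : dot u (a *: v) = a * dot u v.
Proof. by rewrite !(dotC u) dotZl. Qed.

Lemma dot_orth m u (A : 'M[R]_(m, n)) v :
  u *m A^T = 0 -> (v <= A)%MS -> dot u v = 0.
Proof. by move=> uA /submxP[D ->]; rewrite /dot trmx_mul mulmxA uA mul0mx mxE. Qed.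

Lemma sqnorm_ge0 u : 0 <= sqnorm u.
Proof. by rewrite /sqnorm dotE sumr_ge0 // => i _; rewrite -expr2 sqr_ge0. Qed.

Lemma sqnorm_eq0 u : sqnorm u = 0 -> u = 0.
Proof.
rewrite /sqnorm dotE => /psumr_eq0P u0; apply/rowP => i; rewrite mxE.
by apply/eqP; rewrite -sqrf_eq0 expr2 u0 // => j _; rewrite -expr2 sqr_ge0.
Qed.

Lemma sqnormD u v : sqnorm (u + v) = sqnorm u + 2 * dot u v + sqnorm v.
Proof. by rewrite /sqnorm dotDl !dotDr (dotC v u); ring. Qed.

Lemma sqnormZ a u : sqnorm (a *: u) = a ^+ 2 * sqnorm u.
Proof. by rewrite /sqnorm dotZl dotZr mulrA expr2. Qed.

Lemma sqnormD_orth u v : dot u v = 0 -> sqnorm (u + v) = sqnorm u + sqnorm v.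
Proof. by move=> uv; rewrite sqnormD uv mulr0 addr0. Qed.

Lemma dot_sqr_le u v : dot u v ^+ 2 <= sqnorm u * sqnorm v.
Proof.
have [u0|u_neq0] := eqVneq (sqnorm u) 0.
  by rewrite (sqnorm_eq0 u0) /sqnorm /dot !mul0mx mxE expr0n mul0r.
have u_gt0 : 0 < sqnorm u by rewrite lt_def u_neq0 sqnorm_ge0.
(* expand [0 <= |(u.u) v - (u.v) u|^2] *)
have := sqnorm_ge0 (sqnorm u *: v + (- dot u v) *: u).
rewrite sqnormD !sqnormZ dotZl dotZr (dotC v u) /sqnorm => h.
have : 0 <= dot u u * (dot u u * dot v v - dot u v ^+ 2).
  by move: h; congr (_ <= _); ring.
by rewrite pmulr_rge0 // subr_ge0.
Qed.

End DotProduct.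

Section OrthogonalProjection.
Variables (R : realFieldType) (d : nat).
Implicit Types (x y p : 'rV[R]_d).

Lemma row_free_gram_unit m (B : 'M[R]_(m, d)) : row_free B -> B *m B^T \in unitmx.
Proof.
move=> freeB; rewrite unitmxE unitfE; apply/negP => /det0P[x x_neq0 xBB].
have : sqnorm (x *m B) = 0.
  by rewrite /sqnorm /dot trmx_mul !mulmxA -(mulmxA x) xBB mul0mx mxE.
by move/sqnorm_eq0/eqP; rewrite mulmx_free_eq0 // (negbTE x_neq0).
Qed.

Lemma orth_submx m1 m2 x (B : 'M[R]_(m1, d)) (C : 'M[R]_(m2, d)) :
  x *m B^T = 0 -> (C <= B)%MS -> x *m C^T = 0.
Proof. by move=> xB /submxP[D ->]; rewrite trmx_mul mulmxA xB mul0mx. Qed.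

(* Orthogonal projector onto the row space of [A], computed on a basis of it
   so that no independence of the rows of [A] is needed. *)
Definition oproj m (A : 'M[R]_(m, d)) : 'M[R]_d :=
  let B := row_base A in B^T *m invmx (B *m B^T) *m B.

Definition perp m (A : 'M[R]_(m, d)) x : 'rV[R]_d := x *m (1%:M - oproj A).

Section Perp.
Variables (m : nat) (A : 'M[R]_(m, d)).

Lemma perpE x : perp A x = x - x *m oproj A.
Proof. by rewrite /perp mulmxBr mulmx1. Qed.

Lemma perpD x y : perp A (x + y) = perp A x + perp A y.
Proof. exact: mulmxDl. Qed.

Lemma perpZ a x : perp A (a *: x) = a *: perp A x.
Proof. by rewrite /perp scalemxAl. Qed.

Lemma mxrank_oproj : (\rank (oproj A) <= \rank A)%N.
Proof. by rewrite -(eq_row_base A) mxrankM_maxr. Qed.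

Lemma perp_compl x : (x - perp A x <= A)%MS.
Proof. by rewrite perpE opprB addrC subrK -(eq_row_base A) mulmxA submxMl. Qed.

Lemma perp_orth x : perp A x *m A^T = 0.
Proof.
apply: orth_submx (_ : A <= row_base A)%MS; last by rewrite eq_row_base.
have uB := row_free_gram_unit (row_base_free A).
rewrite perpE mulmxBl /oproj; move: (row_base A) uB => B uB.
by rewrite -!mulmxA mulVmx // mulmx1 subrr.
Qed.

Lemma perp_unique x p : (x - p <= A)%MS -> p *m A^T = 0 -> perp A x = p.
Proof.
move=> xpA pA; apply/eqP; rewrite -subr_eq0; apply/eqP/sqnorm_eq0.
apply: (dot_orth (A := A)); first by rewrite mulmxBl perp_orth pA subrr.
have -> : perp A x - p = (x - p) - (x - perp A x).
  by rewrite opprB [RHS]addrC addrA subrK.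
by rewrite addmx_sub ?eqmx_opp ?perp_compl.
Qed.

Lemma perp_id x : x *m A^T = 0 -> perp A x = x.
Proof. by apply: perp_unique; rewrite subrr sub0mx. Qed.

Lemma perp_eq x y : (x - y <= A)%MS -> perp A x = perp A y.
Proof.
move=> xyA; apply: perp_unique (perp_orth y).
by rewrite -(subrK y x) -addrA addmx_sub ?perp_compl.
Qed.

Lemma sqnorm_perp_le x : sqnorm (perp A x) <= sqnorm x.
Proof.
rewrite -{2}(subrK (perp A x) x) addrC sqnormD_orth ?lerDl ?sqnorm_ge0 //.
exact: dot_orth (perp_orth x) (perp_compl x).
Qed.

Lemma perp_mulmx n (M : 'M[R]_(n, d)) (g : 'rV[R]_n) :
  perp A (g *m M) = \sum_(i < n) g 0 i *: perp A (row i M).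
Proof.
by rewrite /perp -mulmxA mulmx_sum_row; apply: eq_bigr => i _; rewrite row_mul.
Qed.

End Perp.
End OrthogonalProjection.

Lemma normalized_kernel_vector (R : realFieldType) n m (A : 'M[R]_(n, m)) :
  (\rank A < n)%N ->
  exists g : 'rV[R]_n, exists j, [/\ g 0 j = 1, forall i, `|g 0 i| <= 1 & g *m A = 0].
Proof.
move=> rankA; have n_gt0 : (0 < n)%N by apply: leq_ltn_trans rankA.
have : ~~ row_free A by rewrite /row_free neq_ltn rankA.
rewrite -kermx_eq0 => /rowV0Pn[b /sub_kermxP bA b_neq0].
have [j _ b_max] := @arg_maxP _ _ _ (Ordinal n_gt0) predT (fun i => `|b 0 i|) isT.
have bj_neq0 : b 0 j != 0.
  apply: contraNneq b_neq0 => bj0; apply/eqP/rowP => i; rewrite mxE.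
  by have := b_max i isT; rewrite /= bj0 normr0 normr_le0 => /eqP.
exists ((b 0 j)^-1 *: b), j; split.
- by rewrite mxE mulVf.
- move=> i; rewrite mxE normrM normfV ler_pdivrMl ?normr_gt0 // mulr1.
  exact: b_max.
- by rewrite -scalemxAl bA scaler0.
Qed.

Section EuclideanNorm.
Variables (R : realType) (d : nat).
Implicit Types (u v : 'rV[R]_d).

Lemma enormE u : enorm u = Num.sqrt (sqnorm u).
Proof.
by rewrite /enorm /sqnorm dotE; congr Num.sqrt; apply: eq_bigr => i _; rewrite expr2.
Qed.

Lemma enorm_ge0 u : 0 <= enorm u.
Proof. by rewrite enormE sqrtr_ge0. Qed.

Lemma sqr_enorm u : enorm u ^+ 2 = sqnorm u.
Proof. by rewrite enormE sqr_sqrtr ?sqnorm_ge0. Qed.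

Lemma enorm_le u v : sqnorm u <= sqnorm v -> enorm u <= enorm v.
Proof. by rewrite !enormE => /ler_wsqrtr. Qed.

Lemma enorm_lt e u v :
  0 <= e -> sqnorm u < e ^+ 2 * sqnorm v -> enorm u < e * enorm v.
Proof.
move=> e_ge0 uv; rewrite !enormE -(ger0_norm e_ge0) -sqrtr_sqr -sqrtrM ?sqr_ge0 //.
by rewrite ltr_sqrt // (le_lt_trans (sqnorm_ge0 u)).
Qed.

Lemma enormZ a u : enorm (a *: u) = `|a| * enorm u.
Proof. by rewrite !enormE sqnormZ sqrtrM ?sqr_ge0 // sqrtr_sqr. Qed.

Lemma dot_le_enorm u v : dot u v <= enorm u * enorm v.
Proof.
rewrite !enormE -sqrtrM ?sqnorm_ge0 // (le_trans (ler_norm _)) //.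
by rewrite -sqrtr_sqr ler_wsqrtr // dot_sqr_le.
Qed.

Lemma enormD u v : enorm (u + v) <= enorm u + enorm v.
Proof.
rewrite -(ger0_norm (addr_ge0 (enorm_ge0 u) (enorm_ge0 v))) -sqrtr_sqr enormE.
rewrite ler_wsqrtr // sqrrD !sqr_enorm sqnormD lerD2r lerD2l.
by have := dot_le_enorm u v; lra.
Qed.

Lemma enorm_sum n (f : 'I_n -> 'rV[R]_d) :
  enorm (\sum_(i < n) f i) <= \sum_(i < n) enorm (f i).
Proof.
elim/big_rec2: _ => [|i y u _ IH].
  by rewrite enormE /sqnorm /dot mul0mx mxE sqrtr0.
by apply: le_trans (enormD _ _) _; rewrite lerD2l.
Qed.

End EuclideanNorm.

Section Gram.
Variables (R : realType) (d : nat).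
Local Notation pt := 'rV[R]_d.
Implicit Types (s t : seq pt) (v : pt).

Definition gram_fun n (f : 'I_n -> pt) : R :=
  \det (\matrix_(i < n) f i *m (\matrix_(i < n) f i)^T).

Definition gram s : R := gram_fun (fun i : 'I_(size s) => nth 0 s i).

Lemma VOLE (S : {fset pt}) : VOL S = Num.sqrt (gram (enum_fset S)).
Proof. by []. Qed.

Lemma gram_funE s n (f : 'I_n -> pt) :
  size s = n -> (forall i : 'I_n, nth 0 s i = f i) -> gram s = gram_fun f.
Proof.
move=> sz_s; move: f; case: n / sz_s => f sf.
rewrite /gram /gram_fun; congr (\det (_ *m _^T));
  by apply/matrixP => i j; rewrite !mxE sf.
Qed.

Lemma gram_fun_perm n (p : 'S_n) (f : 'I_n -> pt) : gram_fun (f \o p) = gram_fun f.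
Proof.
rewrite /gram_fun; set M := \matrix_(i < n) f i.
have -> : \matrix_(i < n) (f \o p) i = perm_mx p *m M.
  by rewrite -row_permE; apply/matrixP => i j; rewrite !mxE.
rewrite trmx_mul !mulmxA -(mulmxA _ M) !det_mulmx det_tr det_perm.
by rewrite mulrC mulrA -expr2 sqrr_sign mul1r.
Qed.

Lemma gram_perm_eq s t : perm_eq s t -> gram s = gram t.
Proof.
move=> st; have /tuple_permP[p s_def] : perm_eq s (in_tuple t) by [].
rewrite (@gram_funE s _ (tnth (in_tuple t) \o p)); last 2 first.
- by rewrite s_def size_tuple.
- by move=> i; rewrite s_def -tnth_nth tnth_mktuple.
by rewrite gram_fun_perm; symmetry; apply: gram_funE => // i; rewrite (tnth_nth 0).
Qed.

Lemma gramE s : gram s = \det (vecs_mx s *m (vecs_mx s)^T).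
Proof. by []. Qed.

Lemma vecs_mx_cons v s : vecs_mx (v :: s) = col_mx v (vecs_mx s).
Proof.
apply/matrixP => i j; rewrite [RHS]mxE.
by case: splitP => k ik; rewrite !mxE ik //= (ord1 k).
Qed.

Lemma row_vecs_mx s (i : 'I_(size s)) : row i (vecs_mx s) = nth 0 s i.
Proof. exact: rowK. Qed.

Lemma mem_vecs_mx v s : v \in s -> (v <= vecs_mx s)%MS.
Proof.
move=> vs; have vs' : (index v s < size s)%N by rewrite index_mem.
have := row_sub (Ordinal vs') (vecs_mx s).
by rewrite row_vecs_mx nth_index.
Qed.

Lemma vecs_mx_subset s t : {subset s <= t} -> (vecs_mx s <= vecs_mx t)%MS.
Proof.
by move=> st; apply/row_subP => i; rewrite row_vecs_mx mem_vecs_mx ?st ?mem_nth.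
Qed.

Lemma gram_cons v s : gram (v :: s) = sqnorm (perp (vecs_mx s) v) * gram s.
Proof.
set N := vecs_mx s; set r := perp N v.
have /submxP[a aN] := perp_compl N v.
rewrite [LHS]gramE.
have -> : vecs_mx (v :: s) = block_mx 1%:M a 0 1%:M *m col_mx r N.
  by rewrite vecs_mx_cons mul_block_col !mul1mx mul0mx add0r -aN addrC subrK.
rewrite trmx_mul !mulmxA -(mulmxA _ (col_mx r N)) !det_mulmx det_tr.
rewrite (@det_ublock _ 1 (size s)) !det1 !mul1r mulr1 tr_col_mx mul_col_row.
have -> : N *m r^T = 0 by rewrite -[N]trmxK -trmx_mul perp_orth trmx0.
by rewrite perp_orth (@det_ublock _ 1 (size s)) det_mx11.
Qed.

End Gram.

Section Height.
Variables (R : realType) (d : nat).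
Local Notation pt := 'rV[R]_d.
Implicit Types (p : pt) (Q : {fset pt}) (H : 'M[R]_d).

Lemma distE p H : dist p H = enorm (perp H p).
Proof.
rewrite /dist; set S := [set _ | _ in _]%classic.
have S_min : S (enorm (perp H p))
  by exists (p - perp H p); [exact: perp_compl | rewrite subKr].
have S_lb : lbound S (enorm (perp H p)).
  move=> _ [h /= hH <-]; rewrite (@perp_eq _ _ _ H p (p - h)) ?subKr //.
  exact/enorm_le/sqnorm_perp_le.
apply/eqP; rewrite eq_le lb_le_inf ?andbT; last 2 first.
- by exists (enorm (perp H p)).
- exact: S_lb.
by apply: ge_inf S_min; exists 0 => _ [h _ <-]; apply: enorm_ge0.
Qed.

Lemma height_ge0 Q H : 0 <= height Q H.
Proof. exact: bigmax_ge_id. Qed.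

Lemma dist_le_height Q H p : p \in Q -> dist p H <= height Q H.
Proof. by move=> pQ; apply: (le_bigmax_seq 0 p xpredT (fun q => dist q H) pQ). Qed.

Lemma height_le Q H b :
  0 <= b -> (forall p, p \in Q -> dist p H <= b) -> height Q H <= b.
Proof. by move=> b_ge0 Qb; rewrite /height big_seq; apply: bigmax_le. Qed.

End Height.

Lemma enorm_perp_mulmx_le (R : realType) d m (A : 'M[R]_(m, d)) n
    (M : 'M[R]_(n, d)) (g : 'rV[R]_n) (t δ : R) :
  (forall i, `|g 0 i| <= t) -> (forall i, enorm (perp A (row i M)) <= δ) ->
  enorm (perp A (g *m M)) <= n%:R * (t * δ).
Proof.
move=> g_le rowM_le; rewrite perp_mulmx (le_trans (enorm_sum _)) //.
rewrite mulr_natl -[X in _ *+ X]card_ord -sumr_const; apply: ler_sum => i _.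
by rewrite enormZ ler_pM ?normr_ge0 ?enorm_ge0.
Qed.

Lemma lt_of_sqrt_mulr_lt (R : rcfType) (A B g e : R) :
  0 <= B -> 0 < e -> Num.sqrt (A * g) < e * Num.sqrt (B * g) -> A < e ^+ 2 * B.
Proof.
move=> B_ge0 e_gt0 lt_sqrt.
have Bg_gt0 : 0 < B * g.
  by rewrite -sqrtr_gt0 -(pmulr_rgt0 _ e_gt0) (le_lt_trans (sqrtr_ge0 _) lt_sqrt).
have g_gt0 : 0 < g by nra.
have : A * g < e ^+ 2 * (B * g).
  rewrite -ltr_sqrt ?(mulr_gt0 (exprn_gt0 2 e_gt0)) //.
  by rewrite [X in _ < X]sqrtrM ?sqr_ge0 // sqrtr_sqr gtr0_norm.
by rewrite mulrA ltr_pM2r.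
Qed.

Section LocalSearch.
Variables (R : realType) (d : nat) (P : {fset 'rV[R]_d}) (eps : R).
Implicit Types (C : {fset 'rV[R]_d}) (q x : 'rV[R]_d).
Local Open Scope fset_scope.

Lemma greedy_reach_card n C : greedy_reach P n C -> #|` C| = n.
Proof.
elim=> [|m C0 C1 _ IH [p [_ pC0 -> _]]]; first by rewrite cardfs0.
by rewrite cardfsU1 pC0 IH.
Qed.

Lemma swap_step_card C C' : swap_step P eps C C' -> #|` C'| = #|` C|.
Proof.
move=> [q [p [_ qC pC -> _]]].
by rewrite cardfsU1 in_fsetD1 (negbTE qC) andbF (cardfsD1 p C) pC.
Qed.

Lemma LS_output_card k C : LS_output P k eps C -> #|` C| = k.
Proof.
move=> [C0 [greedyC0 + _]]; rewrite -(greedy_reach_card greedyC0).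
by elim=> [? ? /swap_step_card | | ? ? ? _ -> _ ->].
Qed.

Lemma VOL_swap C q x : q \notin C -> x \in C ->
  VOL (q |` (C `\ x)) = Num.sqrt (gram (q :: rem x (enum_fset C))).
Proof.
move=> qC xC; rewrite VOLE; congr Num.sqrt; apply: gram_perm_eq.
apply: uniq_perm; first exact: fset_uniq.
  by rewrite /= rem_uniq ?fset_uniq // andbT; apply: contra qC => /mem_rem.
by move=> y; rewrite in_cons (mem_rem_uniq _ (fset_uniq C)) !inE.
Qed.

Lemma LS_output_swap_lt k C q x : LS_output P k eps C ->
  q \in P -> q \notin C -> x \in C ->
  Num.sqrt (gram (q :: rem x (enum_fset C)))
    < (1 + eps) * Num.sqrt (gram (enum_fset C)).
Proof.
move=> [_ [_ _ no_swap]] qP qC xC; rewrite -VOL_swap // ltNge; apply/negP => ge.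
by apply: no_swap; exists (q |` (C `\ x)), q, x.
Qed.

End LocalSearch.

Section SwapOptimal.
Variables (R : realType) (d : nat) (c : seq 'rV[R]_d) (q : 'rV[R]_d) (eps : R).
Hypotheses (c_uniq : uniq c) (eps_gt0 : 0 < eps).
Hypothesis swap_lt : forall x, x \in c ->
  Num.sqrt (gram (q :: rem x c)) < (1 + eps) * Num.sqrt (gram c).

Local Notation M := (vecs_mx c).
Local Notation x_ i := (nth 0 c i).
Local Notation N i := (vecs_mx (rem (x_ i) c)).

Lemma perp_rem_mulmx (g : 'rV[R]_(size c)) (i : 'I_(size c)) :
  perp (N i) (g *m M) = g 0 i *: perp (N i) (x_ i).
Proof.
rewrite -perpZ; apply: perp_eq.
rewrite mulmx_sum_row (bigD1 i) //= row_vecs_mx addrAC subrr add0r.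
apply: summx_sub => j ji; rewrite scalemx_sub // row_vecs_mx mem_vecs_mx //.
by rewrite (mem_rem_uniq _ c_uniq) inE /= nth_uniq // ji mem_nth.
Qed.

Lemma sqnorm_perp_swap_lt (i : 'I_(size c)) :
  sqnorm (perp (N i) q) < (1 + eps) ^+ 2 * sqnorm (perp (N i) (x_ i)).
Proof.
have := swap_lt (mem_nth 0 (ltn_ord i)).
rewrite (gram_perm_eq (perm_to_rem (mem_nth 0 (ltn_ord i)))) !gram_cons.
by apply: lt_of_sqrt_mulr_lt; rewrite ?sqnorm_ge0 ?addr_gt0.
Qed.

Lemma swap_coef_bound (a : 'rV[R]_(size c)) (i : 'I_(size c)) : q - perp M q = a *m M ->
  `|a 0 i| < 1 + eps /\ enorm (perp M q) < (1 + eps) * enorm (perp (N i) (x_ i)).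
Proof.
move=> aM; set r := perp M q; set y := perp (N i) (x_ i).
have NM : (N i <= M)%MS by apply: vecs_mx_subset => z /mem_rem.
have q_perp : perp (N i) q = a 0 i *: y + r.
  rewrite -{1}(subrK r q) perpD aM perp_rem_mulmx [perp _ r]perp_id //.
  exact: orth_submx (perp_orth M q) NM.
have yM : (y <= M)%MS.
  rewrite -[y](subKr (x_ i)) addmx_sub ?eqmx_opp //.
    by rewrite mem_vecs_mx ?mem_nth.
  exact: submx_trans (perp_compl _ _) NM.
have := sqnorm_perp_swap_lt i.
rewrite q_perp sqnormD_orth; last first.
  by rewrite dotC (dot_orth (perp_orth M q)) ?scalemx_sub.
rewrite sqnormZ -/y => lt; clearbody r y.
have y_ge0 := sqnorm_ge0 y.
split; last first.
  apply: enorm_lt; first by rewrite addr_ge0 // ltW.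
  by apply: le_lt_trans lt; rewrite lerDr mulr_ge0 ?sqr_ge0.
rewrite ltNge; apply/negP => le_a.
have le_sq : (1 + eps) ^+ 2 <= a 0 i ^+ 2.
  rewrite -[a 0 i ^+ 2]real_normK ?num_real // lerXn2r ?nnegrE //.
  by rewrite addr_ge0 ?ler01 ?ltW.
have := ler_wpM2r y_ge0 le_sq; rewrite leNgt => /negP; apply.
by apply: le_lt_trans lt; rewrite lerDl sqnorm_ge0.
Qed.

Variables (H : 'M[R]_d) (δ : R).
Hypotheses (rankH : (\rank H < size c)%N)
           (c_height : forall x, x \in c -> dist x H <= δ).

Lemma enorm_perp_row_le i : enorm (perp H (row i M)) <= δ.
Proof. by rewrite row_vecs_mx -distE c_height ?mem_nth. Qed.

Lemma exists_perp_rem_le :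
  exists i : 'I_(size c), enorm (perp (N i) (x_ i)) <= (size c)%:R * δ.
Proof.
have rank_lt : (\rank (M *m oproj H) < size c)%N.
  exact: leq_ltn_trans (mxrankM_maxr _ _) (leq_ltn_trans (mxrank_oproj H) rankH).
have [g [j [gj1 g_le1 gMH]]] := normalized_kernel_vector rank_lt.
exists j; rewrite -[perp _ (x_ j)]scale1r -[X in X *: _]gj1 -perp_rem_mulmx.
apply: le_trans (enorm_le (sqnorm_perp_le _ _)) _.
have -> : g *m M = perp H (g *m M) by rewrite perpE -mulmxA gMH subr0.
rewrite -[δ]mul1r; exact: enorm_perp_mulmx_le g_le1 enorm_perp_row_le.
Qed.

Lemma dist_le_swap_optimal : dist q H <= δ * (2 * (size c)%:R * (1 + eps)).
Proof.
have [j xj_le] := exists_perp_rem_le.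
have [a aM] := submxP (perp_compl M q).
have a_le i : `|a 0 i| <= 1 + eps by case: (swap_coef_bound i aM) => /ltW.
have eps1_ge0 : 0 <= 1 + eps by rewrite addr_ge0 // ltW.
rewrite distE -[q](subrK (perp M q)) aM perpD; apply: le_trans (enormD _ _) _.
have -> : δ * (2 * (size c)%:R * (1 + eps)) =
  (size c)%:R * ((1 + eps) * δ) + (1 + eps) * ((size c)%:R * δ) by ring.
apply: lerD; first exact: enorm_perp_mulmx_le a_le enorm_perp_row_le.
have [_ /ltW r_le] := swap_coef_bound j aM.
apply: le_trans (enorm_le (sqnorm_perp_le _ _)) (le_trans r_le _).
by rewrite ler_wpM2l.
Qed.

End SwapOptimal.

Local Open Scope fset_scope.

Theorem lemma4p1 (R : realType) (d k : nat) (eps : R)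
    (P C : {fset 'rV[R]_d}) (H : 'M[R]_d) :
  (1 <= k)%N -> (k <= d)%N -> 0 < eps ->
  LS_output P k eps C ->
  \rank H = k.-1 ->
  height P H / (2 * k%:R * (1 + eps)) <= height C H.
Proof.
move=> k_gt0 _ eps_gt0 LS_C rankH.
have sizeC : size (enum_fset C) = k := LS_output_card LS_C.
have k_ge1 : 1 <= k%:R :> R by rewrite ler1n.
have K_ge1 : 1 <= 2 * k%:R * (1 + eps) by nra.
rewrite ler_pdivrMr ?(lt_le_trans ltr01) //.
apply: height_le => [|q qP]; first by rewrite mulr_ge0 ?height_ge0 ?(le_trans ler01).
have [qC|qNC] := boolP (q \in C).
  by rewrite (le_trans (dist_le_height H qC)) // ler_peMr ?height_ge0.
rewrite -sizeC; apply: dist_le_swap_optimal => //.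
- exact: fset_uniq.
- by move=> x xC; apply: LS_output_swap_lt LS_C qP qNC xC.
- by rewrite rankH sizeC prednK // ltnSn.
- by move=> x xC; apply: dist_le_height.
Qed.
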